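(* Let $p$ be an odd prime, $n$ an odd integer, and let $r,t$ and $v,w$ be pairs of integers satisfying $\gcd(n,r+t)=\gcd(n,r-t)=\gcd(n,p)=1$ and $\gcd(n,v+w)=\gcd(n,v-w)=1$. Let $u$ be a primitive $n$-th root of unity in an extension of $\mathbb{F}_p$, and set $\lambda_j^{(r,t)}=u^{(n-r)j}-u^{(n-t)j}$ for $j=0,\ldots,n-1$. Then \[\prod_{j=1}^{n-1}\lambda_j^{(r,t)}=\prod_{j=1}^{n-1}\lambda_j^{(v,w)}.\] *)

From HB Require Import structures.
From mathcomp Require Import all_boot all_order all_algebra.
Set Implicit Arguments. Unset Strict Implicit. Unset Printing Implicit Defensive.
Import Order.TTheory GRing.Theory Num.Theory.
Local Open Scope ring_scope.

(* lambda_j^{(r,t)} = u^{(n-r)j} - u^{(n-t)j}, with integer exponents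
   (u is a unit since it is a root of unity). *)
Definition lambda (F : fieldType) (n : nat) (u : F) (r t : int) (j : nat) : F :=
  u ^ ((n%:Z - r) * j%:Z) - u ^ ((n%:Z - t) * j%:Z).

From HB Require Import structures.
From mathcomp Require Import all_boot all_order all_algebra.
Import Order.TTheory GRing.Theory Num.Theory.
Local Open Scope ring_scope.
Set Implicit Arguments. Unset Strict Implicit.

(* Factor out u^((n-t)j): lambda_j = x^j (w^j - 1) with x = u^(n-t) and
   w = u^(t-r), which is again a primitive n-th root of unity because r - t is
   prime to n.  Evaluating X^(n-1) + ... + 1 = prod_(j=1)^(n-1) (X - w^j) at 1
   gives prod (1 - w^j) = n, hence prod (w^j - 1) = n as n - 1 is even; and
   prod_(j=1)^(n-1) x^j = x^(n (n-1)/2) = 1 since x^n = 1.  So the product is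
   n for every admissible pair (r, t). *)

Lemma prim_root_neq0 (R : nzRingType) (n : nat) (z : R) :
  n.-primitive_root z -> z != 0.
Proof.
move=> pz; apply/eqP=> z0; have := prim_expr_order pz.
by rewrite z0 expr0n gtn_eqF ?(prim_order_gt0 pz) // => /eqP; rewrite eq_sym oner_eq0.
Qed.

Lemma prod_expr_odd (R : pzSemiRingType) (n : nat) (x : R) :
  odd n -> x ^+ n = 1 -> \prod_(1 <= j < n) x ^+ j = 1.
Proof.
move=> odd_n xn1; rewrite prodrXr.
have -> : (\sum_(1 <= j < n) j = n * n.-1./2)%N.
  by rewrite -bin2odd // -bin2_sum [in RHS]big_ltn ?(odd_gt0 odd_n).
by rewrite exprM xn1 expr1n.
Qed.

Section PrimitiveRoot.
Variables (F : fieldType) (n : nat) (u : F).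
Hypothesis prim_u : n.-primitive_root u.
Let u_neq0 : u != 0 := prim_root_neq0 prim_u.

Lemma prod_one_subX_prim_root : \prod_(1 <= j < n) (1 - u ^+ j) = n%:R.
Proof.
have := factor_Xn_sub_1 prim_u.
rewrite big_ltn ?(prim_order_gt0 prim_u) // expr0 subrX1.
have X1_neq0 : ('X - 1 : {poly F}) != 0 by rewrite -polyC1 polyXsubC_eq0.
move/(mulfI X1_neq0)/(congr1 (horner^~ 1)).
rewrite horner_prod horner_sum.
under eq_bigr do rewrite hornerXsubC.
under [in RHS]eq_bigr do rewrite hornerXn expr1n.
by rewrite sumr_const card_ord.
Qed.

Lemma prod_subX1_prim_root : odd n -> \prod_(1 <= j < n) (u ^+ j - 1) = n%:R.
Proof.
move=> odd_n; rewrite -prod_one_subX_prim_root.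
under eq_bigr do rewrite -opprB -mulN1r.
rewrite big_split /= prodr_const_nat subn1.
by case: n odd_n => // m /= /negbTE even_m; rewrite -signr_odd even_m mul1r.
Qed.

Lemma expz_prim_root_mod (k : int) : u ^ k = u ^+ `|(k %% n%:Z)%Z|%N.
Proof.
have n_neq0 : n%:Z != 0 by rewrite eqz_nat -lt0n (prim_order_gt0 prim_u).
rewrite {1}(divz_eq k n%:Z) expfzDr // -exprz_exp exprzAC.
rewrite [u ^ n%:Z](prim_expr_order prim_u) exp1rz mul1r.
by rewrite -{1}(gez0_abs (modz_ge0 k n_neq0)).
Qed.

Lemma prim_root_expz_coprime (k : int) :
  gcdz n%:Z k = 1 -> n.-primitive_root (u ^ k).
Proof.
rewrite expz_prim_root_mod prim_root_exp_coprime // /coprime gcdnC.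
by rewrite -gcdz_modr /gcdz absz_nat => -[->].
Qed.

Lemma lambda_factor (r t : int) (j : nat) :
  lambda n u r t j = (u ^ (n%:Z - t)) ^+ j * ((u ^ (t - r)) ^+ j - 1).
Proof.
rewrite /lambda mulrBr mulr1 -!exprz_exp -exprMn.
by rewrite -expfzDr // addrA subrK.
Qed.

End PrimitiveRoot.

Lemma prod_lambda (F : fieldType) (n : nat) (u : F) (r t : int) :
  n.-primitive_root u -> odd n -> gcdz n%:Z (r - t) = 1 ->
  \prod_(1 <= j < n) lambda n u r t j = n%:R.
Proof.
move=> prim_u odd_n coprime_rt.
have prim_w : n.-primitive_root (u ^ (t - r)).
  by apply: prim_root_expz_coprime => //; rewrite -opprB gcdzN.
have xn1 : (u ^ (n%:Z - t)) ^+ n = 1.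
  change ((u ^ (n%:Z - t)) ^ n%:Z = 1).
  by rewrite exprzAC [u ^ n%:Z](prim_expr_order prim_u) exp1rz.
under eq_bigr do rewrite (lambda_factor prim_u).
by rewrite big_split /= prod_expr_odd // mul1r prod_subX1_prim_root.
Qed.

Theorem lemma3 (p : nat) (F : fieldType) (n : nat) (r t v w : int) (u : F) :
  prime p -> odd p -> p \in [pchar F] ->
  odd n ->
  gcdz n%:Z (r + t) = 1 -> gcdz n%:Z (r - t) = 1 -> coprime n p ->
  gcdz n%:Z (v + w) = 1 -> gcdz n%:Z (v - w) = 1 ->
  n.-primitive_root u ->
  \prod_(1 <= j < n) lambda n u r t j = \prod_(1 <= j < n) lambda n u v w j.
Proof.
move=> _ _ _ odd_n _ coprime_rt _ _ coprime_vw prim_u.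
by rewrite !prod_lambda.
Qed.
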